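(* The labelling of the pointed partition posets ($\operatorname{Perm}$-partition posets) on $n$ elements, which labels the edge between $(A_1,\dots,A_p)$ and the pointed partition obtained by merging $A_i$ and $A_j$ by $(\max(\min A_i,\min A_j),\,a+n-p)$, where $a\in\{\min A_i,\min A_j\}$ is the minimal element of the part whose pointed element is not chosen as pointed element of $A_i\cup A_j$ (labels ordered lexicographically), is compatible with isomorphisms of subposets.
   Context: A pointed partition of $\{1,\dots,n\}$ is a set partition with one distinguished element in each part; they are ordered by refinement, where $A\le B$ requires moreover that each element pointed in $B$ is pointed in $A$. These are the partition posets of the basic-set operad $\operatorname{Perm}$, whose elements in arity $n$ are $e_{n,k}$, $1\le k\le n$, with $\gamma(e_{p,a};e_{k_1,b_1},\dots,e_{k_p,b_p})=e_{k_1+\dots+k_p,\,k_1+\dots+k_{a-1}+b_a}$. For a covering $\lambda\prec\omega$ merging parts $A_i,A_j$, $D_\lambda^\omega=\{\min A_i,\min A_j\}$ and $\delta_\lambda^\omega$ is the element of $\operatorname{Perm}$ on these two points recording which one carries the chosen pointed element; for general $\lambda\le\omega$, $D_\lambda^\omega$ is the set of minima of the parts of $\lambda$ contained in non-trivially merged parts of $\omega$, and $\delta^\omega_\lambda$ is the induced pointed partition of $D_\lambda^\omega$. Two interval subposets $\Pi_1,\Pi_2$ with $E_i=\bigcup_{\lambda\le\omega\in\Pi_i}D_\lambda^\omega$ are isomorphic if there is a poset isomorphism $g$ and an increasing bijection $f:E_1\to E_2$ with $\delta_{g(\lambda)}^{g(\omega)}=f(\delta_\lambda^\omega)$ for every covering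 $\lambda\prec\omega$. A family of labellings is compatible with isomorphisms of subposets if every such isomorphism induces a map on labels sending increasing chains to increasing chains, non-increasing chains to non-increasing chains, and preserving the lexicographic preorder on chains. *)

From mathcomp Require Import all_boot.
Set Implicit Arguments. Unset Strict Implicit. Unset Printing Implicit Defensive.

(* Elements 1..n are represented by ordinals i : 'I_n standing for i+1. *)

Section PP.
Variable n : nat.

Definition is_pp (x : {set {set 'I_n}} * {set 'I_n}) : bool :=
  partition x.1 [set: 'I_n] && [forall B in x.1, #|B :&: x.2| == 1].

Definition pp := {x : {set {set 'I_n}} * {set 'I_n} | is_pp x}.

Definition parts (x : pp) : {set {set 'I_n}} := (val x).1.
Definition pointed (x : pp) : {set 'I_n} := (val x).2.

Definition pple (x y : pp) : bool :=
  [forall B in parts x, exists C in parts y, B \subset C] &&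
  (pointed y \subset pointed x).

Definition pplt (x y : pp) : bool := pple x y && (x != y).

Definition ppcov (x y : pp) : bool :=
  pplt x y && ~~ [exists z : pp, pplt x z && pplt z y].

(* 0-based value of the minimum of a (nonempty) part *)
Definition bmin (B : {set 'I_n}) : nat := \big[minn/n]_(i in B) (i : nat).

(* D_x^y : minima of the parts of x contained in non-trivially merged parts
   of y (= parts of x which are not parts of y) *)
Definition ppD (x y : pp) : {set 'I_n} :=
  [set i : 'I_n | [exists B in parts x :\: parts y, (i : nat) == bmin B]].

(* delta_x^y, the induced pointed partition of D_x^y:
   two minima are in the same part iff they lie in the same part of y;
   a minimum is pointed iff its x-part contains the pointed element of its
   y-part. *)
Definition ppdelta_blk (x y : pp) (i j : 'I_n) : bool :=
  pblock (parts y) i == pblock (parts y) j.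
Definition ppdelta_pt (x y : pp) (i : 'I_n) : bool :=
  pblock (parts x) i :&: pointed y != set0.

(* The labelling of a covering x < y merging A_i and A_j:
   (max(min A_i, min A_j), a + n - p), with 1-based values, where p is the
   number of parts of x and a the minimum of the merged part whose pointed
   element is not kept. *)
Definition pplabel (x y : pp) : nat * nat :=
  ((\max_(i in ppD x y) (i : nat)).+1,
   (\max_(i in ppD x y | ~~ ppdelta_pt x y i) (i : nat)).+1 + n - #|parts x|).

Definition ppinterval (x y : pp) : {set pp} := [set z | pple x z && pple z y].

Definition ppE (I : {set pp}) : {set 'I_n} :=
  \bigcup_(x in I) \bigcup_(y in I | pple x y) ppD x y.

(* maximal chains x = z0 < z1 < ... < zk = y of the interval [x,y],
   given as the list s = [z1; ...; zk] *)
Definition maxchain (x y : pp) (s : seq pp) : bool :=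
  path ppcov x s && (last x s == y).

End PP.

(* isomorphism of interval subposets [x1,y1] (in Pi_n1) and [x2,y2]
   (in Pi_n2), given by g (poset isomorphism) and f (increasing bijection
   E1 -> E2) compatible with the delta's of coverings *)
Definition pp_subposet_iso n1 n2 (x1 y1 : pp n1) (x2 y2 : pp n2)
  (g : pp n1 -> pp n2) (f : 'I_n1 -> 'I_n2) : Prop :=
  let I1 := ppinterval x1 y1 in
  let I2 := ppinterval x2 y2 in
  [/\ g @: I1 = I2,
      {in I1 &, injective g} /\
      {in I1 &, forall u v, pple u v = pple (g u) (g v)},
      f @: ppE I1 = ppE I2,
      {in ppE I1 &, forall i j : 'I_n1, (i < j)%N -> (f i < f j)%N} &
      {in I1 &, forall u v, ppcov u v ->
         [/\ ppD (g u) (g v) = f @: ppD u v,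
             {in ppD u v &, forall i j,
                 ppdelta_blk (g u) (g v) (f i) (f j) = ppdelta_blk u v i j} &
             {in ppD u v, forall i,
                 ppdelta_pt (g u) (g v) (f i) = ppdelta_pt u v i}]}].

Definition lablt (a b : nat * nat) : bool :=
  (a.1 < b.1)%N || ((a.1 == b.1) && (a.2 < b.2)%N).

Definition incr_word (w : seq (nat * nat)) : bool := sorted lablt w.

Fixpoint wlexle (u v : seq (nat * nat)) : bool :=
  match u, v with
  | [::], _ => true
  | _ :: _, [::] => false
  | a :: u', b :: v' => lablt a b || ((a == b) && wlexle u' v')
  end.

Definition word n (x : pp n) (s : seq (pp n)) : seq (nat * nat) :=
  pairmap (@pplabel n) x s.

From mathcomp Require Import all_boot zify.
Set Implicit Arguments. Unset Strict Implicit. Unset Printing Implicit Defensive.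

(* A covering u < v of pointed partitions merges exactly two parts: some part B of u
   contains no pointed element of v, and merging B into the part of u that holds the
   pointed element of the v-part of B already gives v. Hence along a maximal chain
   the number of parts drops by one at each step, and the label of the k-th covering
   is (m + 1, a + 1 + c + k), with c = n - #parts of the bottom and m, a in the set E
   of minima. An isomorphism of subposets carries D and the pointings along the
   increasing bijection f, so it replaces m, a by f m, f a and keeps the shift c + k;
   comparisons of consecutive labels, and of labels at equal positions, are
   therefore unchanged. *)

Section PointedPartitions.
Variable n : nat.
Implicit Types (x u v : pp n) (B C : {set 'I_n}).

Lemma partition_parts x : partition (parts x) [set: 'I_n].
Proof. by case: x => [[P p] ppx]; rewrite /parts /=; case/andP: ppx. Qed.

Lemma card_part_pointed x B : B \in parts x -> #|B :&: pointed x| = 1.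
Proof.
case: x => [[P p] ppx]; rewrite /parts /pointed /= => xB.
by case/andP: ppx => _ /forall_inP/(_ B xB)/eqP.
Qed.

Lemma trivIset_parts x : trivIset (parts x).
Proof. by case/and3P: (partition_parts x). Qed.

Lemma set0_notin_parts x : set0 \notin parts x.
Proof. by case/and3P: (partition_parts x). Qed.

Lemma part_neq0 x B : B \in parts x -> B != set0.
Proof. by apply: contraTneq => ->; apply: set0_notin_parts. Qed.

Lemma pblock_parts x i : pblock (parts x) i \in parts x.
Proof. by apply: pblock_mem; case/and3P: (partition_parts x) => /eqP ->. Qed.

Lemma mem_pblock_parts x i : i \in pblock (parts x) i.
Proof. by rewrite mem_pblock; case/and3P: (partition_parts x) => /eqP ->. Qed.

Lemma pblock_partsE x B i : B \in parts x -> i \in B -> pblock (parts x) i = B.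
Proof. exact: def_pblock (trivIset_parts x). Qed.

Lemma pblock_parts_eq x B i : B \in parts x -> (pblock (parts x) i == B) = (i \in B).
Proof.
by move=> xB; apply/eqP/idP => [<-|]; [apply: mem_pblock_parts | apply: pblock_partsE].
Qed.

Lemma parts_meet_eq x B C i : B \in parts x -> C \in parts x -> i \in B -> i \in C -> B = C.
Proof. by move=> xB xC iB iC; rewrite -(pblock_partsE xB iB) (pblock_partsE xC iC). Qed.

Lemma pointed_part_uniq x B i j :
  B \in parts x -> i \in B :&: pointed x -> j \in B :&: pointed x -> i = j.
Proof.
by move/card_part_pointed/eqP/cards1P => [k ->]; rewrite !in_set1 => /eqP-> /eqP->.
Qed.

Lemma card_parts x : #|parts x| <= n.
Proof.
rewrite -[X in _ <= X]card_ord -cardsT (card_partition (partition_parts x)) -sum1_card.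
by apply: leq_sum => B /part_neq0; rewrite card_gt0.
Qed.

Lemma pple_refl x : pple x x.
Proof.
by rewrite /pple subxx andbT; apply/forall_inP => B xB; apply/exists_inP; exists B.
Qed.

Lemma pple_sub_pblock u v B i :
  pple u v -> B \in parts u -> i \in B -> B \subset pblock (parts v) i.
Proof.
case/andP=> /forall_inP refines _ uB iB; case/exists_inP: (refines B uB) => C vC BC.
by rewrite (pblock_partsE vC (subsetP BC i iB)).
Qed.

Lemma pple_pblock u v i : pple u v -> pblock (parts u) i \subset pblock (parts v) i.
Proof. by move/pple_sub_pblock; apply; [apply: pblock_parts | apply: mem_pblock_parts]. Qed.

Lemma pple_trans : transitive (@pple n).
Proof.
move=> y x z xy yz; have [/andP[_ yx] /andP[_ zy]] := (xy, yz).
rewrite /pple (subset_trans zy yx) andbT; apply/forall_inP => B xB.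
have /set0Pn[i iB] := part_neq0 xB.
apply/exists_inP; exists (pblock (parts z) i); first exact: pblock_parts.
exact: subset_trans (pple_sub_pblock xy xB iB) (pple_pblock i yz).
Qed.

Lemma pointed_part_neq0 x B : B \in parts x -> B :&: pointed x != set0.
Proof. by move=> xB; rewrite -card_gt0 card_part_pointed. Qed.

Lemma pple_eq_pointed u v : pple u v -> pointed u \subset pointed v -> u = v.
Proof.
move=> uv upv; have /andP[_ vpu] := uv.
have ptE : pointed v = pointed u by apply/eqP; rewrite eqEsubset vpu.
have parts_uv B : B \in parts u -> B \in parts v.
  move=> uB; have /set0Pn[p /setIP[pB pu]] := pointed_part_neq0 uB.
  suff -> : B = pblock (parts v) p by apply: pblock_parts.
  apply/eqP; rewrite eqEsubset (pple_sub_pblock uv uB pB); apply/subsetP => e eC.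
  have /set0Pn[q /setIP[qe qu]] := pointed_part_neq0 (pblock_parts u e).
  have eq_qp : q = p.
    apply: (pointed_part_uniq (pblock_parts v p)); rewrite ptE !inE ?qu ?pu ?andbT.
      rewrite -(pblock_partsE (pblock_parts v p) eC).
      exact: subsetP (pple_pblock e uv) q qe.
    by rewrite mem_pblock_parts.
  rewrite -(pblock_partsE uB pB) -eq_qp (pblock_partsE (pblock_parts u e) qe).
  exact: mem_pblock_parts.
have partsE : parts u = parts v.
  apply/setP => C; apply/idP/idP; first exact: parts_uv.
  move=> vC; have /set0Pn[e eC] := part_neq0 vC.
  rewrite -(pblock_partsE vC eC).
  have vBe := parts_uv _ (pblock_parts u e).
  by rewrite (pblock_partsE vBe (mem_pblock_parts u e)) pblock_parts.
move: ptE partsE; case: u {uv upv vpu parts_uv} => [[P p] ?]; case: v => [[Q q] ?].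
by rewrite /parts /pointed /= => ptE partsE; apply: val_inj; rewrite /= ptE partsE.
Qed.

Lemma pplt_part_unpointed u v :
  pplt u v -> exists2 B, B \in parts u & B :&: pointed v = set0.
Proof.
case/andP=> uv neq_uv.
have [/exists_inP[B uB /eqP vB0] | /exists_inPn meets] :=
  boolP [exists B in parts u, B :&: pointed v == set0]; first by exists B.
case/eqP: neq_uv; apply: pple_eq_pointed => //; apply/subsetP => p pu.
have /set0Pn[q /setIP[qB qv]] := meets _ (pblock_parts u p).
have /andP[_ vpu] := uv.
have -> // : p = q.
apply: (pointed_part_uniq (pblock_parts u p)); rewrite inE ?mem_pblock_parts ?qB //.
by rewrite (subsetP vpu).
Qed.

End PointedPartitions.

Section Merge.
Variables (n : nat) (u : pp n) (B B0 : {set 'I_n}).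
Hypotheses (uB : B \in parts u) (uB0 : B0 \in parts u) (B0_neqB : B0 != B).

Definition merge_block (i : 'I_n) : {set 'I_n} :=
  if pblock (parts u) i == B then B0 else pblock (parts u) i.

Lemma merge_block_in i : i \in B -> merge_block i = B0.
Proof. by rewrite /merge_block pblock_parts_eq // => ->. Qed.

Lemma merge_block_notin i : i \notin B -> merge_block i = pblock (parts u) i.
Proof. by rewrite /merge_block pblock_parts_eq // => /negbTE->. Qed.

Lemma merge_block_part K i : K \in parts u :\ B -> i \in K -> merge_block i = K.
Proof.
case/setD1P=> KB uK iK; have iNB : i \notin B.
  by apply: contra_neqN KB => iB; apply: parts_meet_eq uK uB iK iB.
by rewrite merge_block_notin // (pblock_partsE uK iK).
Qed.

Lemma merge_block_parts i : merge_block i \in parts u :\ B.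
Proof.
rewrite /merge_block; case: eqP => [_ | neqB]; first by rewrite !inE B0_neqB.
by apply/setD1P; split; [apply/eqP | apply: pblock_parts].
Qed.

Definition merge_class (K : {set 'I_n}) : {set 'I_n} := [set i | merge_block i == K].

Lemma merge_partsE :
  preim_partition merge_block [set: 'I_n] = merge_class @: (parts u :\ B).
Proof.
apply/setP => D; apply/imsetP/imsetP => [[i _ ->] | [K KuB ->]].
  exists (merge_block i); first exact: merge_block_parts.
  by apply/setP => j; rewrite !inE eq_sym.
have /set0Pn[i iK] := part_neq0 (setD1P KuB).2.
by exists i => //; apply/setP => j; rewrite !inE (merge_block_part KuB iK) eq_sym.
Qed.

Lemma merge_class_pointed K :
  K \in parts u :\ B -> merge_class K :&: (pointed u :\: B) = K :&: pointed u.
Proof.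
move=> KuB; have /setD1P[KB uK] := KuB; apply/setP => i; rewrite !inE.
case: (boolP (i \in B)) => [iB | iNB]; rewrite /= ?andbF ?andbT.
  suff iNK : i \notin K by rewrite (negbTE iNK).
  by apply: contra_neqN KB => iK; apply: parts_meet_eq uK uB iK iB.
by rewrite merge_block_notin // pblock_parts_eq.
Qed.

Lemma is_pp_merge : is_pp (preim_partition merge_block [set: 'I_n], pointed u :\: B).
Proof.
rewrite /is_pp /= preim_partitionP merge_partsE; apply/forall_inP => _ /imsetP[K KuB ->].
by rewrite merge_class_pointed // card_part_pointed //; case/setD1P: KuB.
Qed.

Definition merge : pp n := exist (fun x => is_pp x) _ is_pp_merge.

Lemma pplt_merge : pplt u merge.
Proof.
apply/andP; split.
  apply/andP; split; last exact: subsetDl.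
  apply/forall_inP => K uK; apply/exists_inP; have /set0Pn[e eK] := part_neq0 uK.
  exists (merge_class (merge_block e)).
    by rewrite /parts /= merge_partsE imset_f ?merge_block_parts.
  apply/subsetP => j jK; rewrite inE /merge_block.
  by rewrite (pblock_partsE uK jK) (pblock_partsE uK eK).
apply/eqP => u_merge; have /set0Pn[p /setIP[pB pu]] := pointed_part_neq0 uB.
by move: pu; rewrite u_merge /pointed /= inE pB.
Qed.

Lemma pple_merge v C :
  pple u v -> B :&: pointed v = set0 -> C \in parts v -> B :|: B0 \subset C ->
  pple merge v.
Proof.
move=> uv Bv0 vC BB0C; apply/andP; split.
  rewrite /parts /= merge_partsE; apply/forall_inP => _ /imsetP[K KuB ->].
  have /set0Pn[e eK] := part_neq0 (setD1P KuB).2.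
  apply/exists_inP; exists (if K == B0 then C else pblock (parts v) e).
    by case: eqP => // _; apply: pblock_parts.
  apply/subsetP => j; rewrite inE => /eqP mbj.
  case: (boolP (j \in B)) => [jB | jNB].
    by rewrite -mbj merge_block_in // eqxx; apply: (subsetP BB0C); rewrite inE jB.
  rewrite merge_block_notin // in mbj; case: (K =P B0) => [KB0 | _].
    by apply: (subsetP BB0C); rewrite !inE -KB0 -mbj mem_pblock_parts orbT.
  apply: (subsetP (pple_sub_pblock uv (setD1P KuB).2 eK)).
  by rewrite -mbj mem_pblock_parts.
apply/subsetP => p pv; have /andP[_ vpu] := uv.
rewrite /pointed /= inE (subsetP vpu) // andbT.
apply/negP => pB; have : p \in B :&: pointed v by rewrite inE pB pv.
by rewrite Bv0 inE.
Qed.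

Lemma card_parts_merge : #|parts merge|.+1 = #|parts u|.
Proof.
rewrite /parts /= merge_partsE card_in_imset; first by rewrite [in RHS](cardsD1 B) uB.
move=> K1 K2 K1uB _ eqK; have /set0Pn[e eK1] := part_neq0 (setD1P K1uB).2.
have : e \in merge_class K1 by rewrite inE (merge_block_part K1uB eK1).
by rewrite eqK inE (merge_block_part K1uB eK1) => /eqP.
Qed.

End Merge.

Lemma ppcov_card_parts n (u v : pp n) : ppcov u v -> #|parts u| = #|parts v|.+1.
Proof.
case/andP=> ltuv no_mid; have [B uB Bv0] := pplt_part_unpointed ltuv.
have /andP[uv _] := ltuv; have /set0Pn[b bB] := part_neq0 uB.
have /set0Pn[c /setIP[cC cv]] := pointed_part_neq0 (pblock_parts v b).
have B0_neqB : pblock (parts u) c != B.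
  apply/eqP => cB; have : c \in B :&: pointed v by rewrite inE -cB mem_pblock_parts cv.
  by rewrite Bv0 inE.
have BB0C : B :|: pblock (parts u) c \subset pblock (parts v) b.
  rewrite subUset (pple_sub_pblock uv uB bB).
  by rewrite -(pblock_partsE (pblock_parts v b) cC) pple_pblock.
set z := merge uB (pblock_parts u c) B0_neqB.
have <- : z = v.
  apply/eqP; apply: contraNT no_mid => neq_zv; apply/existsP; exists z.
  by rewrite pplt_merge /pplt neq_zv (pple_merge uB (pblock_parts u c) B0_neqB uv Bv0 (pblock_parts v b) BB0C).
by rewrite card_parts_merge.
Qed.

Lemma ppcov_offset n (u v : pp n) :
  ppcov u v -> n - #|parts v| = (n - #|parts u|).+1.
Proof. by move=> cov_uv; have := card_parts u; rewrite (ppcov_card_parts cov_uv); lia. Qed.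

Lemma ppD_sub_ppE n (I : {set pp n}) u v :
  u \in I -> v \in I -> pple u v -> ppD u v \subset ppE I.
Proof.
move=> uI vI uv; apply/subsetP => i iD; apply/bigcupP; exists u => //.
by apply/bigcupP; exists v; rewrite ?vI.
Qed.

Lemma path_ppcov_pple n (u : pp n) s : path (@ppcov n) u s -> pple u (last u s).
Proof.
elim: s u => [|v s IH] u /=; first by rewrite pple_refl.
by case/andP=> /andP[/andP[uv _] _] /IH; apply: pple_trans.
Qed.

Lemma bigmin_leq (I : eqType) (r : seq I) (P : pred I) (F : I -> nat) m i :
  i \in r -> P i -> \big[minn/m]_(j <- r | P j) F j <= F i.
Proof.
elim: r => // j r IH; rewrite inE big_cons => /predU1P[<- -> | ir Pi].
  exact: geq_minl.
by case: ifP => _; rewrite ?geq_min IH ?orbT.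
Qed.

Lemma bmin_eq n (B : {set 'I_n}) i :
  i \in B -> {in B, forall j : 'I_n, i <= j} -> bmin B = i.
Proof.
move=> iB imin; have le_min : bmin B <= i by apply: bigmin_leq; rewrite ?mem_index_enum.
have ge_min : i <= bmin B.
  apply: (big_ind (fun k => i <= k)) => [|k l ik il | j /imin //].
    exact: ltnW.
  by rewrite leq_min ik il.
by apply/eqP; rewrite eqn_leq le_min ge_min.
Qed.

Lemma pplt_ppD_unpointed n (u v : pp n) :
  pplt u v -> exists i, (i \in ppD u v) && ~~ ppdelta_pt u v i.
Proof.
move=> ltuv; have [B uB Bv0] := pplt_part_unpointed ltuv.
have /set0Pn[i0 i0B] := part_neq0 uB.
case: (arg_minnP (fun i : 'I_n => i : nat) i0B) => i iB imin.
exists i; rewrite /ppdelta_pt (pblock_partsE uB iB) Bv0 eqxx andbT inE.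
apply/exists_inP; exists B; last by rewrite (bmin_eq iB imin).
rewrite inE uB andbT; apply/negP => vB.
by have := card_part_pointed vB; rewrite Bv0 cards0.
Qed.

Lemma bigmax_imset_homo n1 n2 (f : 'I_n1 -> 'I_n2) (S : {set 'I_n1}) :
  S != set0 -> {in S &, forall i j : 'I_n1, i <= j -> f i <= f j} ->
  exists2 m, m \in S &
    \max_(i in S) (i : nat) = m /\ \max_(j in f @: S) (j : nat) = f m.
Proof.
move=> /set0Pn[i0 i0S] homo.
case: (arg_maxnP (fun i : 'I_n1 => i : nat) i0S) => m mS mmax.
exists m => //; split; apply/eqP; rewrite eqn_leq.
  by rewrite (leq_bigmax_cond _ mS) andbT; apply/bigmax_leqP.
rewrite (leq_bigmax_cond _ (imset_f f mS)) andbT.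
by apply/bigmax_leqP => _ /imsetP[i iS ->]; apply: homo (mmax i iS).
Qed.

(* The label of a covering with (0-based) max D = m, non-kept minimum a and
   offset c = n - #parts. *)
Definition lab (c m a : nat) : nat * nat := (m.+1, a.+1 + c).

Fixpoint lab_word n (c : nat) (ma : seq ('I_n * 'I_n)) : seq (nat * nat) :=
  if ma is p :: ma' then lab c p.1 p.2 :: lab_word c.+1 ma' else [::].

Lemma lablt_lab_succ c m a m' a' :
  lablt (lab c m a) (lab c.+1 m' a') = (m < m') || (m == m') && (a <= a').
Proof. by rewrite /lablt /= ltnS eqSS addnS ltnS leq_add2r. Qed.

Lemma lablt_lab c m a m' a' :
  lablt (lab c m a) (lab c m' a') = (m < m') || (m == m') && (a < a').
Proof. by rewrite /lablt /= ltnS eqSS ltn_add2r. Qed.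

Lemma eq_lab c m a m' a' : (lab c m a == lab c m' a') = (m == m') && (a == a').
Proof. by rewrite xpair_eqE eqSS eqn_add2r eqSS. Qed.

Lemma leq_mono_in_ord n1 n2 (E : {set 'I_n1}) (f : 'I_n1 -> 'I_n2) :
  {in E &, forall i j : 'I_n1, i < j -> f i < f j} ->
  {in E &, forall i j : 'I_n1, (f i <= f j) = (i <= j)}.
Proof.
move=> incr i j iE jE; case: (ltngtP i j) => [lt | gt | /val_inj->]; last by rewrite !leqnn.
  by have := incr _ _ iE jE lt; lia.
by have := incr _ _ jE iE gt; lia.
Qed.

Section LabelWordTransport.
Variables (n1 n2 : nat) (E : {set 'I_n1}) (f : 'I_n1 -> 'I_n2).
Hypothesis f_mono : {in E &, forall i j : 'I_n1, (f i <= f j) = (i <= j)}.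

Let fpair (p : 'I_n1 * 'I_n1) := (f p.1, f p.2).

Lemma ltn_mono_in : {in E &, forall i j : 'I_n1, (f i < f j) = (i < j)}.
Proof. by move=> i j iE jE; rewrite !ltnNge f_mono. Qed.

Lemma eqn_mono_in : {in E &, forall i j : 'I_n1, (f i == f j :> nat) = (i == j :> nat)}.
Proof. by move=> i j iE jE; rewrite !eqn_leq !f_mono. Qed.

Lemma path_lab_word_map c c' p ma : p \in setX E E -> all [in setX E E] ma ->
  path lablt (lab c' (f p.1) (f p.2)) (lab_word c'.+1 (map fpair ma)) =
  path lablt (lab c p.1 p.2) (lab_word c.+1 ma).
Proof.
elim: ma p c c' => [// | [q1 q2] ma IH] [p1 p2] c c' /setXP[p1E p2E].
case/andP=> /setXP[q1E q2E] maE /=.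
rewrite (IH (q1, q2) c.+1 c'.+1) ?in_setX ?q1E //.
by rewrite !lablt_lab_succ ltn_mono_in ?eqn_mono_in ?f_mono.
Qed.

Lemma sorted_lab_word_map c c' ma : all [in setX E E] ma ->
  sorted lablt (lab_word c' (map fpair ma)) = sorted lablt (lab_word c ma).
Proof. by case: ma => [// | p ma] /= /andP[pE maE]; apply: path_lab_word_map. Qed.

Lemma wlexle_lab_word_map c c' ma mb : all [in setX E E] ma -> all [in setX E E] mb ->
  wlexle (lab_word c' (map fpair ma)) (lab_word c' (map fpair mb)) =
  wlexle (lab_word c ma) (lab_word c mb).
Proof.
elim: ma mb c c' => [// | [p1 p2] ma IH] [// | [q1 q2] mb] c c' /=.
case/andP=> /setXP[p1E p2E] maE /andP[/setXP[q1E q2E] mbE].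
by rewrite (IH mb c.+1 c'.+1) // !lablt_lab !eq_lab !ltn_mono_in ?eqn_mono_in.
Qed.

End LabelWordTransport.

Section SubposetIsomorphism.
Variables (n1 n2 : nat) (x1 y1 : pp n1) (x2 y2 : pp n2).
Variables (g : pp n1 -> pp n2) (f : 'I_n1 -> 'I_n2).
Hypothesis iso : pp_subposet_iso x1 y1 x2 y2 g f.

Local Notation I1 := (ppinterval x1 y1).
Local Notation E1 := (ppE (ppinterval x1 y1)).

Lemma iso_f_mono : {in E1 &, forall i j : 'I_n1, (f i <= f j) = (i <= j)}.
Proof. by case: iso => _ _ _ incr _; apply: leq_mono_in_ord. Qed.

Lemma iso_ppcov u v : u \in I1 -> v \in I1 -> ppcov u v -> ppcov (g u) (g v).
Proof.
case: iso => gI [g_inj g_mono] _ _ _ uI vI /andP[/andP[uv neq_uv] no_mid].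
rewrite /ppcov /pplt -g_mono // uv (inj_in_eq g_inj) // neq_uv /=.
apply: contra no_mid => /existsP[z /andP[/andP[guz neq_guz] /andP[zgv neq_zgv]]].
have /[!inE]/andP[x2gu _] : g u \in ppinterval x2 y2 by rewrite -gI imset_f.
have /[!inE]/andP[_ gvy2] : g v \in ppinterval x2 y2 by rewrite -gI imset_f.
have : z \in ppinterval x2 y2 by rewrite inE (pple_trans x2gu guz) (pple_trans zgv gvy2).
rewrite -gI => /imsetP[w wI eq_z]; rewrite {z}eq_z in guz neq_guz zgv neq_zgv *.
apply/existsP; exists w; rewrite /pplt !g_mono // guz zgv.
by apply/andP; split; [apply: contra_neq neq_guz => -> | apply: contra_neq neq_zgv => ->].
Qed.

Lemma pplabel_iso u v : u \in I1 -> v \in I1 -> ppcov u v ->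
  exists2 p, p \in setX E1 E1 &
    pplabel u v = lab (n1 - #|parts u|) p.1 p.2 /\
    pplabel (g u) (g v) = lab (n2 - #|parts (g u)|) (f p.1) (f p.2).
Proof.
move=> uI vI cov_uv; have /andP[ltuv _] := cov_uv; have /andP[uv _] := ltuv.
case: iso => _ _ _ _ /(_ u v uI vI cov_uv)[Dg _ ptg].
have DE := ppD_sub_ppE uI vI uv.
have homo : {in ppD u v &, forall i j : 'I_n1, i <= j -> f i <= f j}.
  by move=> i j iD jD; rewrite iso_f_mono ?(subsetP DE).
pose S := [set i in ppD u v | ~~ ppdelta_pt u v i].
have SD : S \subset ppD u v by apply/subsetP => i /setIdP[].
have [i iS] : exists i, i \in S.
  by have [i] := pplt_ppD_unpointed ltuv; exists i; rewrite inE.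
(* Nonemptiness matters: an empty \max is the junk value 0, which f does not fix. *)
have S0 : S != set0 by apply/set0Pn; exists i.
have D0 : ppD u v != set0 by apply/set0Pn; exists i; apply: (subsetP SD).
have [m mD [Dmax Dgmax]] := bigmax_imset_homo D0 homo.
have [a aS [Smax Sgmax]] := bigmax_imset_homo S0 (sub_in2 (subsetP SD) homo).
exists (m, a); first by rewrite in_setX (subsetP DE m mD) (subsetP DE a (subsetP SD a aS)).
rewrite /pplabel -!addnBA ?card_parts //.
have -> : \max_(j in ppD u v | ~~ ppdelta_pt u v j) (j : nat) = a.
  by rewrite -Smax; apply: eq_bigl => j; rewrite [in RHS]inE.
have -> : \max_(j in ppD (g u) (g v) | ~~ ppdelta_pt (g u) (g v) j) (j : nat) = f a.
  rewrite -Sgmax; apply: eq_bigl => j; rewrite Dg.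
  apply/andP/imsetP => [[/imsetP[k kD ->]] | [k /setIdP[kD kNpt] ->]].
    by rewrite ptg // => kNpt; exists k => //; apply/setIdP.
  by rewrite imset_f ?ptg.
by rewrite Dg Dmax Dgmax.
Qed.

Lemma word_iso u s : u \in I1 -> path (@ppcov n1) u s -> last u s = y1 ->
  exists2 ma, all [in setX E1 E1] ma &
    word u s = lab_word (n1 - #|parts u|) ma /\
    word (g u) (map g s) =
      lab_word (n2 - #|parts (g u)|) [seq (f p.1, f p.2) | p <- ma].
Proof.
elim: s u => [|v s IH] u uI /=; first by exists [::].
case/andP=> cov_uv path_vs last_y1.
have vI : v \in I1.
  have /andP[/andP[uv _] _] := cov_uv; have /[!inE]/andP[x1u _] := uI.
  by rewrite (pple_trans x1u uv) -last_y1 path_ppcov_pple.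
have [p pE [lab_uv lab_guv]] := pplabel_iso uI vI cov_uv.
have [ma maE [word_v word_gv]] := IH v vI path_vs last_y1.
exists (p :: ma); first by rewrite /= pE.
rewrite (ppcov_offset cov_uv) in word_v.
rewrite (ppcov_offset (iso_ppcov uI vI cov_uv)) in word_gv.
by rewrite /word /= -/(word v s) -/(word (g v) (map g s)) word_v word_gv lab_uv lab_guv.
Qed.

End SubposetIsomorphism.

Theorem mainTheorem7 :
  forall (n1 n2 : nat) (x1 y1 : pp n1) (x2 y2 : pp n2)
         (g : pp n1 -> pp n2) (f : 'I_n1 -> 'I_n2),
    pple x1 y1 -> pple x2 y2 ->
    pp_subposet_iso x1 y1 x2 y2 g f ->
    (forall s, maxchain x1 y1 s ->
       incr_word (word (g x1) (map g s)) = incr_word (word x1 s)) /\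
    (forall s t, maxchain x1 y1 s -> maxchain x1 y1 t ->
       wlexle (word x1 s) (word x1 t) ->
       wlexle (word (g x1) (map g s)) (word (g x1) (map g t))).
Proof.
move=> n1 n2 x1 y1 x2 y2 g f x1y1 _ iso.
have x1I : x1 \in ppinterval x1 y1 by rewrite inE pple_refl x1y1.
have f_mono := iso_f_mono iso.
split => [s /andP[path_s /eqP last_s] |
          s t /andP[path_s /eqP last_s] /andP[path_t /eqP last_t]].
  have [ma maE [-> ->]] := word_iso iso x1I path_s last_s.
  exact: sorted_lab_word_map f_mono _ _ _ maE.
have [ma maE [-> ->]] := word_iso iso x1I path_s last_s.
have [mb mbE [-> ->]] := word_iso iso x1I path_t last_t.
by rewrite (wlexle_lab_word_map f_mono (n1 - #|parts x1|)) //.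
Qed.
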